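(* Let $A,\beta,\xi_0,\theta>0$ and $0<\alpha<\frac12$. Let $v_{n,m}\colon(0,\xi_0]\to[0,\infty)$, for integers $n,m\ge0$, and let $w\colon(0,\xi_0]\to[0,\infty)$ be bounded. Suppose that for all $n,m,k\ge0$ and $\xi\in(0,\xi_0]$: (1) $v_{n+1,m}(\xi)\le v_{n,m}(\xi)$; (2) $v_{n+k,m}(\xi)\le4(1-A\xi^2)^kv_{n,m}(\xi)$; (3) $v_{0,m}(\xi)\le\theta^{-m}w(\xi)$. Then for any $c>0$ the sequence $t_n=\sup\{v_{n,m}(\xi):\ n^{-\alpha}<\xi\le\xi_0,\ m\in\mathbb Z_{\ge0},\ m<c\log n\}$ decays rapidly in $n$.
   Context: A sequence $\{t_n\}$ decays rapidly in $n$ if for each $\ell\ge1$ there is $C$ with $|t_n|\le Cn^{-\ell}$ for all $n\ge1$ (a supremum over the empty set is taken to be $0$). *)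

From Stdlib Require Import Reals.
From Coquelicot Require Import Coquelicot.
Open Scope R_scope.

(* Supremum of a set of reals, with the convention sup of the empty set = 0.
   (Lub_Rbar of the empty set is -oo; the max with 0 implements the convention.
   In our application all elements are >= 0, so for nonempty sets this is the
   usual supremum, possibly +oo.) *)
Definition sup0 (S : R -> Prop) : Rbar :=
  match Lub_Rbar S with
  | Finite x => Finite (Rmax 0 x)
  | p_infty => p_infty
  | m_infty => Finite 0
  end.

Definition decays_rapidly (t : nat -> Rbar) : Prop :=
  forall l : nat, (1 <= l)%nat ->
    exists C : R, forall n : nat, (1 <= n)%nat ->
      Rbar_le (Rbar_abs (t n)) (Finite (C * / (INR n ^ l))).

Definition t_seq (v : nat -> nat -> R -> R) (alpha xi0 c : R) (n : nat) : Rbar :=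
  sup0 (fun y => exists (m : nat) (xi : R),
          Rpower (INR n) (- alpha) < xi /\ xi <= xi0 /\
          INR m < c * ln (INR n) /\ y = v n m xi).

(** For [ξ > n^{-α}], the bound (2) applied from [n = 0] together with (3)
    gives [v_{n,m}(ξ) <= 4 B θ^{-m} e^{-A ξ² n} <= 4 B n^{c |log θ|} e^{-A n^{1-2α}}],
    where [B] bounds [w]; as [1 - 2α > 0] the stretched exponential beats every
    power of [n].  When [1 - A ξ² <= 0], (2) with [k = 1] already forces
    [v_{1,m}(ξ) <= 0], and (1) keeps the sequence there. *)

From Stdlib Require Import Reals Lra Lia Psatz.
From Coquelicot Require Import Coquelicot.
Open Scope R_scope.

Lemma exp_le_exp x y : x <= y -> exp x <= exp y.
Proof.
  intros [Hlt | ->]; [now left; apply exp_increasing | apply Rle_refl].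
Qed.

Lemma exp_pow x n : exp x ^ n = exp (x * INR n).
Proof.
  rewrite <- Rpower_pow by apply exp_pos.
  unfold Rpower; rewrite ln_exp, Rmult_comm; reflexivity.
Qed.

Lemma sup0_abs_le (S : R -> Prop) (M : R) :
  0 <= M -> (forall y, S y -> y <= M) -> Rbar_le (Rbar_abs (sup0 S)) (Finite M).
Proof.
  intros HM HS; unfold sup0.
  destruct (Lub_Rbar_correct S) as [_ Hlub].
  assert (Hle : Rbar_le (Lub_Rbar S) (Finite M)) by (apply Hlub; exact HS).
  destruct (Lub_Rbar S) as [x | |]; simpl in *.
  - rewrite Rabs_right; unfold Rmax; destruct Rle_dec; lra.
  - contradiction.
  - rewrite Rabs_R0; exact HM.
Qed.

Lemma sqr_div2_le_exp u : 0 <= u -> u ^ 2 / 2 <= exp u.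
Proof.
  intros Hu.
  pose proof (exp_ge_taylor u 2 Hu) as Htaylor; simpl in Htaylor.
  nra.
Qed.

Lemma linear_sub_exp_le P A u :
  0 < A -> 0 <= u -> P * u - A * exp u <= P ^ 2 / (2 * A).
Proof.
  intros HA Hu.
  pose proof (sqr_div2_le_exp u Hu) as Hexp.
  assert (Hsq : P ^ 2 / (2 * A) - (P * u - A * (u ^ 2 / 2))
                = (P - A * u) ^ 2 / (2 * A)) by (field; lra).
  assert (0 <= (P - A * u) ^ 2 / (2 * A)).
  { apply Rmult_le_pos; [apply pow2_ge_0 | left; apply Rinv_0_lt_compat; lra]. }
  nra.
Qed.

Lemma le_4_exp_of_geometric (u : nat -> R) (a : R) :
  (forall n, 0 <= u n) -> (forall n, u (S n) <= u n) ->
  (forall k, u k <= 4 * (1 - a) ^ k * u O) ->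
  forall n, u n <= 4 * exp (- a * INR n) * u O.
Proof.
  intros Hnonneg Hdecr Hgeom n.
  pose proof (Hnonneg O) as Hu0.
  destruct (Rle_or_lt (1 - a) 0) as [Hq | Hq].
  - destruct n as [| n].
    + rewrite Rmult_0_r, exp_0; lra.
    + assert (Hle1 : u (S n) <= u 1%nat).
      { induction n as [| n IH]; [apply Rle_refl | eapply Rle_trans; eauto]. }
      pose proof (Hgeom 1%nat) as Hu1; rewrite pow_1 in Hu1.
      assert (0 <= exp (- a * INR (S n)) * u O)
        by (apply Rmult_le_pos; [left; apply exp_pos | exact Hu0]).
      assert ((1 - a) * u O <= 0) by (apply Rmult_le_0_r; assumption).
      lra.
  - eapply Rle_trans; [apply Hgeom |].
    apply Rmult_le_compat_r; [exact Hu0 |].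
    apply Rmult_le_compat_l; [lra |].
    rewrite <- exp_pow.
    apply pow_incr; split; [lra |].
    pose proof (exp_ineq1_le (- a)); lra.
Qed.

Lemma Rpower_sub_2mul_le x alpha xi :
  0 < x -> Rpower x (- alpha) < xi -> Rpower x (1 - 2 * alpha) <= xi ^ 2 * x.
Proof.
  intros Hx Hxi.
  replace (1 - 2 * alpha) with (- alpha + - alpha + 1) by ring.
  rewrite !Rpower_plus, Rpower_1 by exact Hx.
  assert (0 < Rpower x (- alpha)) by apply exp_pos.
  apply Rmult_le_compat_r; [lra |].
  rewrite <- Rsqr_pow2; apply Rmult_le_compat; lra.
Qed.

Lemma inv_pow_le_exp theta m y :
  0 < theta -> INR m <= y -> / theta ^ m <= exp (Rabs (ln theta) * y).
Proof.
  intros Htheta Hm.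
  rewrite <- Rpower_pow by exact Htheta.
  unfold Rpower; rewrite <- exp_Ropp; apply exp_le_exp.
  pose proof (pos_INR m).
  pose proof (Rle_abs (- ln theta)) as Habs; rewrite Rabs_Ropp in Habs.
  pose proof (Rabs_pos (ln theta)).
  nra.
Qed.

Lemma exp_ln_sub_Rpower_le K A g (l : nat) x :
  0 < A -> 0 < g -> 1 <= x ->
  exp (K * ln x - A * Rpower x g)
    <= exp (((K + INR l) / g) ^ 2 / (2 * A)) * / x ^ l.
Proof.
  intros HA Hg Hx.
  assert (HL : 0 <= ln x) by (rewrite <- ln_1; apply ln_le; lra).
  rewrite <- (Rpower_pow l x), <- Rpower_Ropp by lra.
  unfold Rpower; rewrite <- exp_plus; apply exp_le_exp.
  pose proof (linear_sub_exp_le ((K + INR l) / g) A (g * ln x) HA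
                ltac:(apply Rmult_le_pos; lra)) as Hbound.
  assert ((K + INR l) / g * (g * ln x) = K * ln x + INR l * ln x)
    by (field; lra).
  lra.
Qed.

Section Decay.

Variables (A xi0 theta alpha c B : R) (v : nat -> nat -> R -> R) (w : R -> R).
Hypothesis hA : 0 < A.
Hypothesis htheta : 0 < theta.
Hypothesis hv_nonneg : forall n m xi, 0 < xi <= xi0 -> 0 <= v n m xi.
Hypothesis hw_nonneg : forall xi, 0 < xi <= xi0 -> 0 <= w xi.
Hypothesis hw_le : forall xi, 0 < xi <= xi0 -> w xi <= B.
Hypothesis h1 : forall n m xi, 0 < xi <= xi0 -> v (S n) m xi <= v n m xi.
Hypothesis h2 : forall n m k xi, 0 < xi <= xi0 ->
  v (n + k)%nat m xi <= 4 * (1 - A * xi ^ 2) ^ k * v n m xi.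
Hypothesis h3 : forall m xi, 0 < xi <= xi0 -> v O m xi <= / theta ^ m * w xi.

Lemma v_le_4_exp n m xi : 0 < xi <= xi0 ->
  v n m xi <= 4 * exp (- (A * xi ^ 2) * INR n) * (/ theta ^ m * w xi).
Proof.
  intros Hxi.
  eapply Rle_trans.
  - apply (le_4_exp_of_geometric (fun k => v k m xi)); intros.
    + now apply hv_nonneg.
    + now apply h1.
    + now apply (h2 O).
  - apply Rmult_le_compat_l; [| now apply h3].
    pose proof (exp_pos (- (A * xi ^ 2) * INR n)); lra.
Qed.

Lemma v_le_on_window n m xi : (1 <= n)%nat ->
  Rpower (INR n) (- alpha) < xi <= xi0 -> INR m < c * ln (INR n) ->
  v n m xi <= 4 * B * exp (c * Rabs (ln theta) * ln (INR n)
                            - A * Rpower (INR n) (1 - 2 * alpha)).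
Proof.
  intros Hn [Hlow Hxi0] Hm.
  assert (Hnpos : 0 < INR n) by (apply lt_0_INR; lia).
  assert (0 < Rpower (INR n) (- alpha)) by apply exp_pos.
  assert (Hxi : 0 < xi <= xi0) by lra.
  assert (Hdecay : exp (- (A * xi ^ 2) * INR n)
                   <= exp (- A * Rpower (INR n) (1 - 2 * alpha))).
  { apply exp_le_exp.
    pose proof (Rpower_sub_2mul_le (INR n) alpha xi Hnpos Hlow).
    nra. }
  assert (Htheta_m : / theta ^ m <= exp (c * Rabs (ln theta) * ln (INR n))).
  { rewrite (Rmult_comm c), Rmult_assoc.
    apply inv_pow_le_exp; lra. }
  pose proof (hw_nonneg xi Hxi); pose proof (hw_le xi Hxi).
  eapply Rle_trans; [now apply v_le_4_exp |].
  replace (c * Rabs (ln theta) * ln (INR n) - A * Rpower (INR n) (1 - 2 * alpha))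
    with (- A * Rpower (INR n) (1 - 2 * alpha) + c * Rabs (ln theta) * ln (INR n))
    by ring.
  rewrite exp_plus.
  assert (0 <= / theta ^ m) by (left; apply Rinv_0_lt_compat, pow_lt, htheta).
  pose proof (exp_pos (- (A * xi ^ 2) * INR n)).
  apply Rle_trans with (4 * exp (- A * Rpower (INR n) (1 - 2 * alpha))
                          * (exp (c * Rabs (ln theta) * ln (INR n)) * B)).
  - apply Rmult_le_compat; [lra | apply Rmult_le_pos; lra | lra |].
    apply Rmult_le_compat; lra.
  - lra.
Qed.

End Decay.

Theorem proposition7p6
  (A beta xi0 theta alpha : R)
  (v : nat -> nat -> R -> R) (w : R -> R)
  (hA : 0 < A) (hbeta : 0 < beta) (hxi0 : 0 < xi0) (htheta : 0 < theta)
  (halpha0 : 0 < alpha) (halpha1 : alpha < 1 / 2)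
  (hv_nonneg : forall n m xi, 0 < xi <= xi0 -> 0 <= v n m xi)
  (hw_nonneg : forall xi, 0 < xi <= xi0 -> 0 <= w xi)
  (hw_bdd : exists B : R, forall xi, 0 < xi <= xi0 -> w xi <= B)
  (h1 : forall n m xi, 0 < xi <= xi0 -> v (S n) m xi <= v n m xi)
  (h2 : forall n m k xi, 0 < xi <= xi0 ->
          v (n + k)%nat m xi <= 4 * (1 - A * xi ^ 2) ^ k * v n m xi)
  (h3 : forall m xi, 0 < xi <= xi0 -> v O m xi <= / theta ^ m * w xi) :
  forall c : R, 0 < c -> decays_rapidly (t_seq v alpha xi0 c).
Proof.
  intros c hc l _.
  destruct hw_bdd as [B hw_le].
  assert (HB : 0 <= B).
  { apply Rle_trans with (w xi0); [apply hw_nonneg | apply hw_le]; lra. }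
  set (K := c * Rabs (ln theta)).
  exists (4 * B * exp (((K + INR l) / (1 - 2 * alpha)) ^ 2 / (2 * A))).
  intros n hn.
  assert (Hn : 1 <= INR n) by (apply (le_INR 1); exact hn).
  apply Rbar_le_trans
    with (Finite (4 * B * exp (K * ln (INR n) - A * Rpower (INR n) (1 - 2 * alpha)))).
  - apply sup0_abs_le.
    + pose proof (exp_pos (K * ln (INR n) - A * Rpower (INR n) (1 - 2 * alpha))).
      apply Rmult_le_pos; lra.
    + intros y (m & xi & Hlow & Hxi0 & Hm & ->).
      now apply (v_le_on_window A xi0 theta alpha c B v w).
  - rewrite !Rmult_assoc.
    do 2 (apply Rmult_le_compat_l; [lra |]).
    apply exp_ln_sub_Rpower_le; lra.
Qed.
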